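(* Let $\Gamma$ be a metrized graph with $v$ vertices. Then $$(v-2)\, r(\Gamma)= \sum_{e_i \in E(\Gamma)} \frac{R_i}{L_i+R_i}\, r(\overline{\Gamma}_i),\qquad\text{where } r(\Gamma):=\sum_{e_i \in E(\Gamma)}\frac{L_i R_i}{L_i+R_i}.$$
   Context: A metrized graph $\Gamma$ is a finite connected graph (multiple edges and self-loops allowed) each of whose edges is identified with a closed segment of positive length, with a finite nonempty vertex set $V(\Gamma)$ containing every point of valence $\neq2$; $v=\#V(\Gamma)$, $E(\Gamma)$ its edge set, $L_i$ the length of $e_i$. For an edge $e_i$ with end points $p_i,q_i$, $R_i$ is the effective resistance between $p_i$ and $q_i$ in $\Gamma-e_i$ (interior of $e_i$ deleted; edges as resistors of resistance equal to length); $R_i=0$ for a self-loop; if $e_i$ is a bridge, every expression involving $R_i$ is interpreted as its limit as $R_i\to\infty$ (so its term in $r(\Gamma)$ is $L_i$ and $R_i/(L_i+R_i)=1$). $\overline\Gamma_i$ is the metrized graph obtained by contracting $e_i$ to a point, with vertex set the image of $V(\Gamma)$; $r(\overline\Gamma_i)$ is computed in $\overline\Gamma_i$. *)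

From HB Require Import structures.
From mathcomp Require Import all_boot all_order all_algebra.
From mathcomp Require Import boolp reals.
Set Implicit Arguments. Unset Strict Implicit. Unset Printing Implicit Defensive.
Import Order.TTheory GRing.Theory Num.Theory.
Local Open Scope ring_scope.

(* A metrized graph is encoded combinatorially by its model: a vertex set
   [verts] (inside an ambient finite type V), a set of edges [edges]
   (inside an ambient finite type E), endpoints [src e], [tgt e] and lengths
   [len e].  Multiple edges and self-loops are allowed. *)
Record mgraph (V E : finType) (R : realType) := MGraph {
  verts : {set V};
  edges : {set E};
  src : E -> V;
  tgt : E -> V;
  len : E -> R }.

Section MGraph.
Variables (V E : finType) (R : realType).
Implicit Types (G : mgraph V E R).

Definition adj G : rel V := fun x y =>
  [exists e in edges G,
     ((src G e == x) && (tgt G e == y)) || ((src G e == y) && (tgt G e == x))].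

Definition is_mgraph G : Prop :=
  [/\ verts G != set0,
      (forall e, e \in edges G -> src G e \in verts G /\ tgt G e \in verts G),
      (forall e, e \in edges G -> 0 < len G e) &
      (forall x y, x \in verts G -> y \in verts G -> connect (adj G) x y)].

Definition delete_edge G (e0 : E) : mgraph V E R :=
  MGraph (verts G) (edges G :\ e0) (src G) (tgt G) (len G).

Definition contract_edge G (e0 : E) : mgraph V E R :=
  let p := src G e0 in let q := tgt G e0 in
  let rl := fun x => if x == q then p else x in
  MGraph (if p == q then verts G else verts G :\ q)
         (edges G :\ e0) (fun e => rl (src G e)) (fun e => rl (tgt G e))
         (len G).

(* Kirchhoff's laws: f is a potential for a unit current entering at a and
   leaving at b, each edge being a resistor of resistance equal to its length *)
Definition kirchhoff G (a b : V) (f : V -> R) : Prop :=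
  forall x, x \in verts G ->
    \sum_(e in edges G | src G e == x) (f x - f (tgt G e)) / len G e
  + \sum_(e in edges G | tgt G e == x) (f x - f (src G e)) / len G e
  = (x == a)%:R - (x == b)%:R.

(* effective resistance between a and b: [Some (f a - f b)] for a Kirchhoff
   potential f when a and b are connected, and [None] (= +infinity) when they
   lie in different components. *)
Definition eff_res G (a b : V) : option R :=
  if connect (adj G) a b then
    match pselect (exists f, kirchhoff G a b f) with
    | left H => Some (let f := projT1 (cid H) in f a - f b)
    | right _ => None
    end
  else None.

Definition R_edge G (e : E) : option R :=
  eff_res (delete_edge G e) (src G e) (tgt G e).

(* L R / (L + R), interpreted as its limit L when R = +infinity *)
Definition par_term (L : R) (oR : option R) : R :=
  if oR is Some r then L * r / (L + r) else L.

(* R / (L + R), interpreted as its limit 1 when R = +infinity *)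
Definition ratio_term (L : R) (oR : option R) : R :=
  if oR is Some r then r / (L + r) else 1.

Definition r_const G : R :=
  \sum_(e in edges G) par_term (len G e) (R_edge G e).

End MGraph.

From HB Require Import structures.
From mathcomp Require Import all_boot all_order all_algebra.
From mathcomp Require Import boolp reals.
From mathcomp Require Import ring lra.
Set Implicit Arguments. Unset Strict Implicit. Unset Printing Implicit Defensive.
Import Order.TTheory GRing.Theory Num.Theory.
Local Open Scope ring_scope.

(* Let phi_e be the potential of a unit current entering at the end p_e of e
   and leaving at its other end q_e, and r_e := phi_e(p_e) - phi_e(q_e) the
   resistance of Gamma between them.  By the parallel law
   L_e R_e / (L_e + R_e) = r_e, so r(Gamma) = sum_e r_e and
   R_e / (L_e + R_e) = r_e / L_e.  Contracting e_i shorts p_i and q_i: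
   subtracting from phi_j the multiple of phi_i that equalises p_i and q_i
   gives a potential on Gamma/e_i, whence the resistance across e_j becomes
   r_j - T_ij^2 / r_i, where T_ij := phi_j(p_i) - phi_j(q_i) is symmetric by
   reciprocity.  The right-hand side is thus
   sum_j (r_j sum_i r_i / L_i - sum_i T_ij^2 / L_i), and the identity follows
   from Foster's theorem sum_i r_i / L_i = v - 1 and the energy identity
   sum_i T_ij^2 / L_i = r_j. *)

Lemma injective_system_solvable (F : fieldType) (T : finType) (d : T -> T -> F) :
  (forall u : T -> F, (forall x, \sum_y u y * d x y = 0) -> forall y, u y = 0) ->
  forall w : T -> F, exists u : T -> F, forall x, \sum_y u y * d x y = w x.
Proof.
move=> inj w.
pose M : 'M[F]_#|T| := \matrix_(i, j) d (enum_val j) (enum_val i).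
have mulM (u : 'rV[F]_#|T|) j :
    (u *m M) 0 j = \sum_y u 0 (enum_rank y) * d (enum_val j) y.
  rewrite !mxE (reindex enum_rank) /=; last exact: onW_bij (enum_rank_bij T).
  by apply: eq_bigr => y _; rewrite !mxE enum_rankK.
have M_unit : M \in unitmx.
  rewrite -row_free_unit -kermx_eq0; apply/eqP/row_matrixP => i; rewrite row0.
  set u := row i _; have /sub_kermxP uM0 : (u <= kermx M)%MS by apply: row_sub.
  apply/rowP => j; rewrite [RHS]mxE -(enum_valK j).
  apply: (inj (fun y => u 0 (enum_rank y)) _ (enum_val j)) => x.
  by rewrite -(enum_rankK x) -mulM uM0 mxE.
pose u := \row_j w (enum_val j) *m invmx M.
exists (fun y => u 0 (enum_rank y)) => x.
by rewrite -(enum_rankK x) -mulM mulmxKV // mxE.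
Qed.

Lemma sum_mul_indicator (R : comNzRingType) (T : finType) (S : {pred T}) (h : T -> R) a :
  a \in S -> \sum_(x in S) h x * (x == a)%:R = h a.
Proof.
move=> aS; rewrite (bigD1 a) //= eqxx mulr1 big1 ?addr0 // => x /andP[_ /negPf->].
by rewrite mulr0.
Qed.

Lemma sum_indicator_diff (R : comNzRingType) (T : finType) (S : {pred T}) (h : T -> R) a b :
  a \in S -> b \in S -> \sum_(x in S) h x * ((x == a)%:R - (x == b)%:R) = h a - h b.
Proof.
move=> aS bS; rewrite -(sum_mul_indicator h aS) -(sum_mul_indicator h bS) -sumrB.
by apply: eq_bigr => x _; ring.
Qed.

Section Network.
Variables (V E : finType) (R : realType).
Implicit Types (G : mgraph V E R) (f h : V -> R).

Definition mgraph_wf G :=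
  (forall e, e \in edges G -> src G e \in verts G /\ tgt G e \in verts G) /\
  (forall e, e \in edges G -> 0 < len G e).

Definition mgraph_connected G :=
  forall x y, x \in verts G -> y \in verts G -> connect (adj G) x y.

(* The current leaving [x] along [e]; it vanishes on self-loops. *)
Definition current G f x e : R :=
  ((x == src G e)%:R - (x == tgt G e)%:R) * (f (src G e) - f (tgt G e)) / len G e.

Definition net_current G f x : R := \sum_(e in edges G) current G f x e.

Definition dirichlet G f h : R :=
  \sum_(e in edges G) (f (src G e) - f (tgt G e)) * (h (src G e) - h (tgt G e)) / len G e.

Lemma kirchhoffE G a b f : kirchhoff G a b f <->
  (forall x, x \in verts G -> net_current G f x = (x == a)%:R - (x == b)%:R).
Proof.
have sumE x :
    \sum_(e in edges G | src G e == x) (f x - f (tgt G e)) / len G e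
  + \sum_(e in edges G | tgt G e == x) (f x - f (src G e)) / len G e
  = net_current G f x.
  rewrite /net_current !big_mkcondr -big_split /=.
  apply: eq_bigr => e _; rewrite /current.
  rewrite !(eq_sym (src G e)) !(eq_sym (tgt G e)).
  case Es: (x == src G e); case Et: (x == tgt G e) => /=.
  - by rewrite -(eqP Es) -(eqP Et); ring.
  - by rewrite -(eqP Es); ring.
  - by rewrite -(eqP Et); ring.
  - ring.
by split=> K x xG; rewrite -?sumE ?K // sumE K.
Qed.

Lemma net_current_lin G f h a b x :
  net_current G (fun y => a * f y + b * h y) x =
  a * net_current G f x + b * net_current G h x.
Proof.
rewrite /net_current !mulr_sumr -big_split; apply: eq_bigr => e _.
rewrite /current /=; ring.
Qed.

Lemma net_currentZ G f c x :
  net_current G (fun y => c * f y) x = c * net_current G f x.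
Proof. by rewrite /net_current mulr_sumr; apply: eq_bigr => e _; rewrite /current; ring. Qed.

Lemma dirichletC G f h : dirichlet G f h = dirichlet G h f.
Proof. by apply: eq_bigr => e _; rewrite (mulrC (f _ - _)). Qed.

Lemma green_identity G f h : mgraph_wf G ->
  \sum_(x in verts G) h x * net_current G f x = dirichlet G h f.
Proof.
move=> [ends _]; under eq_bigr do rewrite /net_current mulr_sumr.
rewrite exchange_big /=; apply: eq_bigr => e /ends[se te].
rewrite -(sum_indicator_diff h se te) -mulrA mulr_suml.
by apply: eq_bigr => x _; rewrite /current; ring.
Qed.

Lemma dirichlet_kirchhoff G a b f h : mgraph_wf G -> a \in verts G -> b \in verts G ->
  kirchhoff G a b f -> dirichlet G h f = h a - h b.
Proof.
move=> wfG aG bG /kirchhoffE Kf; rewrite -green_identity //.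
by rewrite -(sum_indicator_diff h aG bG); apply: eq_bigr => x xG; rewrite Kf.
Qed.

Lemma dirichlet_ge0 G f : mgraph_wf G -> 0 <= dirichlet G f f.
Proof.
move=> [_ lenG]; apply: sumr_ge0 => e eG.
by apply: divr_ge0; [rewrite -expr2 sqr_ge0 | exact: ltW (lenG e eG)].
Qed.

Lemma dirichlet_eq0 G f : mgraph_wf G -> dirichlet G f f = 0 ->
  forall e, e \in edges G -> f (src G e) = f (tgt G e).
Proof.
move=> [_ lenG] /psumr_eq0P E0 e eG.
have /eqP := E0 (fun e' e'G => divr_ge0 (sqr_ge0 _) (ltW (lenG e' e'G))) e eG.
rewrite mulf_eq0 invr_eq0 (gt_eqF (lenG e eG)) orbF -expr2 sqrf_eq0 subr_eq0.
by move/eqP.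
Qed.

Lemma adj_sym G : symmetric (adj G).
Proof.
by move=> x y; apply/idP/idP => /existsP[e /andP[eG exy]];
  apply/existsP; exists e; rewrite eG /= orbC.
Qed.

Lemma connect_const G f x y :
  (forall e, e \in edges G -> f (src G e) = f (tgt G e)) ->
  connect (adj G) x y -> f x = f y.
Proof.
move=> fE /connectP[p pth ->]; elim: p x pth => //= z p IH x /andP[/existsP[e]].
by move=> /andP[eG /orP[]/andP[/eqP<- /eqP<-]] /IH <-; rewrite fE.
Qed.

Lemma kirchhoff_drop_unique G a b f g : mgraph_wf G ->
  kirchhoff G a b f -> kirchhoff G a b g ->
  connect (adj G) a b -> f a - f b = g a - g b.
Proof.
move=> wfG /kirchhoffE Kf /kirchhoffE Kg ab.
pose d y := 1 * f y + (-1) * g y.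
have d0 : dirichlet G d d = 0.
  rewrite -green_identity // big1 // => x xG.
  by rewrite net_current_lin Kf // Kg //; ring.
by have := connect_const (dirichlet_eq0 wfG d0) ab; rewrite /d; lra.
Qed.

Lemma sum_net_current G f : mgraph_wf G -> \sum_(x in verts G) net_current G f x = 0.
Proof.
move=> wfG; under eq_bigr do rewrite -[net_current _ _ _]mul1r.
by rewrite (green_identity _ (fun=> 1)) //; apply: big1 => e _; rewrite subrr !mul0r.
Qed.

Lemma net_current_expand G f x :
  net_current G f x = \sum_y f y * net_current G (fun z => (z == y)%:R) x.
Proof.
under [RHS]eq_bigr do rewrite /net_current mulr_sumr.
rewrite exchange_big /=; apply: eq_bigr => e _.
rewrite /current -(sum_mul_indicator (S := predT) f (isT : src G e \in predT)).
rewrite -(sum_mul_indicator (S := predT) f (isT : tgt G e \in predT)).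
rewrite -sumrB mulr_sumr mulr_suml.
by apply: eq_bigr => y _ /=; rewrite !(eq_sym y); ring.
Qed.

Lemma harmonic_eq0 G f o : mgraph_wf G -> mgraph_connected G -> o \in verts G ->
  f o = 0 -> (forall x, x \in verts G -> x != o -> net_current G f x = 0) ->
  forall x, x \in verts G -> f x = 0.
Proof.
move=> wfG connG oG fo0 harm x xG.
have f_edges : dirichlet G f f = 0.
  rewrite -green_identity // big1 // => y yG.
  by have [->|yo] := eqVneq y o; rewrite ?fo0 ?mul0r // harm // mulr0.
by rewrite -fo0; apply: connect_const (dirichlet_eq0 wfG f_edges) (connG x o xG oG).
Qed.

Lemma kirchhoff_but_one G a b o f : mgraph_wf G ->
  a \in verts G -> b \in verts G -> o \in verts G ->
  (forall x, x \in verts G -> x != o -> net_current G f x = (x == a)%:R - (x == b)%:R) ->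
  kirchhoff G a b f.
Proof.
move=> wfG aG bG oG K; apply/kirchhoffE => x xG.
have [->|] := eqVneq x o; last exact: K.
have := sum_net_current f wfG; rewrite (bigD1 o) //=.
rewrite (eq_bigr (fun y => (y == a)%:R - (y == b)%:R)); last by move=> y /andP[]; apply: K.
have := sum_indicator_diff (fun=> 1 : R) aG bG; rewrite subrr (bigD1 o) //=.
under eq_bigr do rewrite mul1r.
rewrite mul1r; set S := \sum_(i in _ | _) _.
by move=> sum_sources sum_currents; apply: (addIr S); rewrite sum_sources sum_currents.
Qed.

Lemma kirchhoff_exists G a b : mgraph_wf G -> mgraph_connected G ->
  a \in verts G -> b \in verts G -> exists f, kirchhoff G a b f.
Proof.
move=> wfG connG aG bG.
(* Replacing Kirchhoff's law at [a] by [f a = 0] makes the linear system injective. *)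
pose inner x := (x \in verts G) && (x != a).
pose d x y := if inner x then net_current G (fun z => (z == y)%:R) x else (y == x)%:R.
have dE f x : \sum_y f y * d x y = if inner x then net_current G f x else f x.
  rewrite /d; case: ifP => _; first by rewrite net_current_expand.
  exact: (sum_mul_indicator (S := predT) f (isT : x \in predT)).
have d_inj u : (forall x, \sum_y u y * d x y = 0) -> forall y, u y = 0.
  move=> u0 y; have := u0 y; rewrite dE; case: ifP => // /andP[yG ya] _.
  have ua : u a = 0 by have := u0 a; rewrite dE /inner eqxx andbF.
  apply: (harmonic_eq0 wfG connG aG ua _ yG) => x xG xa.
  by have := u0 x; rewrite dE /inner xG xa.
have [f Kf] := injective_system_solvable d_inj
  (fun x => if inner x then (x == a)%:R - (x == b)%:R else 0).
exists f; apply: (kirchhoff_but_one wfG aG bG aG) => x xG xa.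
by have := Kf x; rewrite dE /inner xG xa.
Qed.

Lemma kirchhoff_drop_ge0 G a b f : mgraph_wf G ->
  a \in verts G -> b \in verts G -> kirchhoff G a b f -> 0 <= f a - f b.
Proof. by move=> wfG aG bG Kf; rewrite -(dirichlet_kirchhoff f wfG aG bG Kf) dirichlet_ge0. Qed.

Section DeleteEdge.
Variables (G : mgraph V E R) (j : E).
Hypotheses (wfG : mgraph_wf G) (jG : j \in edges G).
Local Notation p := (src G j).
Local Notation q := (tgt G j).
Local Notation L := (len G j).
Local Notation Gj := (delete_edge G j).

Lemma mgraph_wf_delete : mgraph_wf Gj.
Proof. by case: wfG => ends lenG; split=> e /setD1P[_ eG]; [apply: ends | apply: lenG]. Qed.

Lemma net_current_delete f x :
  net_current G f x = current G f x j + net_current Gj f x.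
Proof. by rewrite /net_current (big_setD1 j jG). Qed.

Lemma mgraph_connected_delete :
  mgraph_connected G -> connect (adj Gj) p q -> mgraph_connected Gj.
Proof.
move=> connG pq x y xG yG; apply: connect_sub (connG x y xG yG) => u w.
case/existsP => e /andP[eG uw]; have [ej|ej] := eqVneq e j.
  move: uw; rewrite ej => /orP[]/andP[/eqP<- /eqP<-] //.
  by rewrite (sym_connect_sym (adj_sym Gj)).
by apply: connect1; apply/existsP; exists e; rewrite /= in_setD1 ej eG.
Qed.

Lemma kirchhoff_parallel g : kirchhoff Gj p q g ->
  kirchhoff G p q (fun y => L / (L + (g p - g q)) * g y).
Proof.
move=> Kg; have [pG qG] := wfG.1 j jG; have L0 := wfG.2 j jG.
have r0 := kirchhoff_drop_ge0 mgraph_wf_delete pG qG Kg.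
move/kirchhoffE: Kg => Kg; apply/kirchhoffE => x xG.
rewrite net_current_delete net_currentZ Kg // /current; field.
by rewrite gt_eqF ?ltr_wpDr // gt_eqF.
Qed.

Lemma kirchhoff_bridge : ~~ connect (adj Gj) p q ->
  kirchhoff G p q (fun y => L * (connect (adj Gj) p y)%:R).
Proof.
move=> pq; have L0 := wfG.2 j jG; apply/kirchhoffE => x xG.
rewrite net_current_delete /net_current big1 ?addr0 => [|e eG]; last first.
  have ee : adj Gj (src Gj e) (tgt Gj e) by apply/existsP; exists e; rewrite eG !eqxx.
  rewrite /current /= -(same_connect_r (sym_connect_sym (adj_sym Gj)) (connect1 ee)) subrr.
  by rewrite mulr0 mul0r.
by rewrite /current connect0 (negPf pq) /= mulr1 mulr0 subr0 mulfK // gt_eqF.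
Qed.

Lemma par_term_R_edge f : mgraph_connected G -> kirchhoff G p q f ->
  par_term L (R_edge G j) = f p - f q.
Proof.
move=> connG Kf; have [pG qG] := wfG.1 j jG; have L0 := wfG.2 j jG.
have drop_Kf := kirchhoff_drop_unique wfG Kf _ (connG p q pG qG).
rewrite /R_edge /eff_res; case: (boolP (connect _ p q)) => [pq|no_pq]; last first.
  by rewrite (drop_Kf _ (kirchhoff_bridge no_pq)) connect0 (negPf no_pq) /=; ring.
have [g0 Kg0] := kirchhoff_exists mgraph_wf_delete
  (mgraph_connected_delete connG pq) pG qG.
case: pselect => [Kex|no_K]; last by exfalso; apply: no_K; exists g0.
have Kg := projT2 (cid Kex); set g := projT1 _ in Kg *.
have r0 := kirchhoff_drop_ge0 mgraph_wf_delete pG qG Kg.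
rewrite (drop_Kf _ (kirchhoff_parallel Kg)) /=; field.
by rewrite gt_eqF ?ltr_wpDr.
Qed.

End DeleteEdge.

Section ContractEdge.
Variables (G : mgraph V E R) (i : E).
Hypotheses (wfG : mgraph_wf G) (connG : mgraph_connected G) (iG : i \in edges G).
Hypothesis (pq : src G i != tgt G i).
Local Notation p := (src G i).
Local Notation q := (tgt G i).
Local Notation Gi := (contract_edge G i).
Let merge x := if x == q then p else x.

Lemma verts_contract : verts Gi = verts G :\ q.
Proof. by rewrite /= (negPf pq). Qed.

Lemma merge_in x : x \in verts G -> merge x \in verts Gi.
Proof.
move=> xG; rewrite verts_contract /merge in_setD1.
by have [_|->] := eqVneq x q; [rewrite pq (wfG.1 i iG).1 | rewrite xG].
Qed.

Lemma mgraph_wf_contract : mgraph_wf Gi.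
Proof.
split=> e /setD1P[_ eG]; last exact: wfG.2 e eG.
by have [sG tG] := wfG.1 e eG; split; apply: merge_in.
Qed.

Lemma mgraph_connected_contract : mgraph_connected Gi.
Proof.
move=> x y; rewrite verts_contract => /setD1P[xq xG] /setD1P[yq yG].
have mergeK z : z != q -> merge z = z by rewrite /merge => /negPf->.
rewrite -(mergeK x xq) -(mergeK y yq).
have /connectP[s path_s ->] := connG xG yG.
elim: s x path_s {xq xG} => /= [|z s IH] x; first by rewrite connect0.
case/andP=> /existsP[e /andP[eG xz]] /IH; apply: connect_trans.
have [ei|ei] := eqVneq e i.
  move: xz; rewrite ei => /orP[]/andP[/eqP<- /eqP<-];
  by rewrite /merge eqxx (negPf pq) connect0.
apply: connect1; apply/existsP; exists e; rewrite /= in_setD1 ei eG /=.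
by case/orP: xz => /andP[/eqP-> /eqP->]; rewrite !eqxx ?orbT.
Qed.

Lemma indicator_merge x y : x != q ->
  (x == merge y)%:R = (x == y)%:R + (x == p)%:R * (y == q)%:R :> R.
Proof.
move=> xq; rewrite /merge; have [->|yq] := eqVneq y q.
  by rewrite (negPf xq) /=; ring.
by rewrite mulr0 addr0.
Qed.

Lemma net_current_contract f x : f p = f q -> x != q ->
  net_current Gi f x = net_current G f x + (x == p)%:R * net_current G f q.
Proof.
move=> fpq xq.
have f_merge y : f (merge y) = f y by rewrite /merge; case: eqP => // ->.
have current_i z : current G f z i = 0 by rewrite /current fpq subrr mulr0 mul0r.
rewrite !(net_current_delete iG) !current_i !add0r /net_current mulr_sumr -big_split.
apply: eq_bigr => e _; rewrite /current /= -/(merge (src G e)) -/(merge (tgt G e)).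
rewrite !f_merge !indicator_merge // !(eq_sym q) /=; ring.
Qed.

Lemma par_term_contract j fi fj : j \in edges G -> j != i ->
  kirchhoff G p q fi -> kirchhoff G (src G j) (tgt G j) fj -> fi p - fi q != 0 ->
  par_term (len G j) (R_edge Gi j) =
  fj (src G j) - fj (tgt G j)
  - (fj p - fj q) * (fi (src G j) - fi (tgt G j)) / (fi p - fi q).
Proof.
move=> jG ji /kirchhoffE Ki /kirchhoffE Kj ri0.
set c := (fj p - fj q) / (fi p - fi q).
pose psi y := 1 * fj y + (- c) * fi y.
have psi_pq : psi p = psi q by apply/eqP; rewrite -subr_eq0 /psi /c; apply/eqP; field.
have psi_merge y : psi (merge y) = psi y by rewrite /merge; case: eqP => // ->.
have qG := (wfG.1 i iG).2.
have Kpsi : kirchhoff Gi (src Gi j) (tgt Gi j) psi.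
  apply/kirchhoffE => x; rewrite verts_contract => /setD1P[xq xG].
  rewrite net_current_contract // !net_current_lin Ki // Kj // Ki // Kj //.
  rewrite -/(merge (src G j)) -/(merge (tgt G j)) !indicator_merge //.
  by rewrite (negPf xq) eqxx (eq_sym q p) (negPf pq) !(eq_sym q) /=; ring.
have jGi : j \in edges Gi by rewrite /= in_setD1 ji.
rewrite (par_term_R_edge mgraph_wf_contract jGi mgraph_connected_contract Kpsi) /=.
by rewrite -/(merge (src G j)) -/(merge (tgt G j)) !psi_merge /psi /c; field.
Qed.

End ContractEdge.

Lemma kirchhoff_family G (I : Type) (P : I -> Prop) (a b : I -> V) :
  mgraph_wf G -> mgraph_connected G ->
  (forall k, P k -> a k \in verts G /\ b k \in verts G) ->
  exists phi : I -> V -> R, forall k, P k -> kirchhoff G (a k) (b k) (phi k).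
Proof.
move=> wfG connG ends.
suff [phi Kphi] : {phi : I -> V -> R & forall k, P k -> kirchhoff G (a k) (b k) (phi k)}.
  by exists phi.
apply: (@choice _ _ (fun k f => P k -> kirchhoff G (a k) (b k) f)) => k.
case: (pselect (P k)) => [Pk|nPk]; last by exists (fun=> 0).
have [aG bG] := ends k Pk; have [f Kf] := kirchhoff_exists wfG connG aG bG.
by exists f.
Qed.

Lemma foster_identity G (phi : E -> V -> R) :
  mgraph_wf G -> mgraph_connected G -> verts G != set0 ->
  (forall e, e \in edges G -> kirchhoff G (src G e) (tgt G e) (phi e)) ->
  \sum_(e in edges G) (phi e (src G e) - phi e (tgt G e)) / len G e = #|verts G|%:R - 1.
Proof.
move=> wfG connG /set0Pn[o oG] Kphi.
have [g Kg] := kirchhoff_family (P := fun x => x \in verts G) (a := id) (b := fun=> o)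
  wfG connG (fun x xG => conj xG oG).
(* [g x] carries a unit current from [x] to the root [o]; by superposition the
   drop of [phi e] is that of [g (src G e) - g (tgt G e)]. *)
have phiE e : e \in edges G -> phi e (src G e) - phi e (tgt G e) =
    \sum_(x in verts G) (g x (src G e) - g x (tgt G e)) *
                         ((x == src G e)%:R - (x == tgt G e)%:R).
  move=> eG; have [sG tG] := wfG.1 e eG; rewrite sum_indicator_diff //.
  pose h y := 1 * g (src G e) y + (-1) * g (tgt G e) y.
  have Kh : kirchhoff G (src G e) (tgt G e) h.
    move/kirchhoffE: (Kg _ sG) => Ks; move/kirchhoffE: (Kg _ tG) => Kt.
    by apply/kirchhoffE => x xG; rewrite net_current_lin Ks // Kt //; ring.
  by rewrite (kirchhoff_drop_unique wfG (Kphi e eG) Kh (connG _ _ sG tG)) /h; ring.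
transitivity (\sum_(x in verts G) net_current G (g x) x).
  rewrite /net_current exchange_big /=; apply: eq_bigr => e eG.
  rewrite phiE // mulr_suml; apply: eq_bigr => x _; rewrite /current; ring.
transitivity (\sum_(x in verts G) (1 - (x == o)%:R) : R).
  by apply: eq_bigr => x xG; move/kirchhoffE: (Kg x xG) => ->; rewrite ?eqxx.
by rewrite sumrB sumr_const (bigD1 o) //= eqxx big1 ?addr0 // => x /andP[_ /negPf->].
Qed.

Section Transfer.
Variables (G : mgraph V E R) (phi : E -> V -> R).
Hypotheses (wfG : mgraph_wf G) (connG : mgraph_connected G).
Hypothesis Kphi : forall e, e \in edges G -> kirchhoff G (src G e) (tgt G e) (phi e).
Local Notation res e := (phi e (src G e) - phi e (tgt G e)).
Local Notation transfer i j := (phi j (src G i) - phi j (tgt G i)).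

Lemma r_const_res : r_const G = \sum_(e in edges G) res e.
Proof. by apply: eq_bigr => e eG; rewrite (par_term_R_edge wfG eG connG (Kphi eG)). Qed.

Lemma ratio_term_res e : e \in edges G ->
  ratio_term (len G e) (R_edge G e) = res e / len G e.
Proof.
move=> eG; have L0 := lt0r_neq0 (wfG.2 e eG).
rewrite -(par_term_R_edge wfG eG connG (Kphi eG)).
case: (R_edge G e) => [r|] /=; last by rewrite divff.
by rewrite [RHS]mulrAC (mulrC (len G e)) mulfK.
Qed.

Lemma transferC i j : i \in edges G -> j \in edges G ->
  transfer i j = phi i (src G j) - phi i (tgt G j).
Proof.
move=> iG jG; have [si ti] := wfG.1 i iG; have [sj tj] := wfG.1 j jG.
rewrite -(dirichlet_kirchhoff (phi j) wfG si ti (Kphi iG)) dirichletC.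
exact: dirichlet_kirchhoff (phi i) wfG sj tj (Kphi jG).
Qed.

Lemma sum_transfer_sq j : j \in edges G ->
  \sum_(i in edges G) transfer i j * transfer i j / len G i = res j.
Proof. by move=> jG; have [sj tj] := wfG.1 j jG; apply: dirichlet_kirchhoff (Kphi jG). Qed.

Lemma ratio_r_const_contract i : i \in edges G ->
  ratio_term (len G i) (R_edge G i) * r_const (contract_edge G i) =
  \sum_(j in edges G) (res i * res j - transfer i j * transfer i j) / len G i.
Proof.
move=> iG; have L0 := lt0r_neq0 (wfG.2 i iG); rewrite ratio_term_res //.
have [ri0|ri0] := eqVneq (res i) 0.
  have [si ti] := wfG.1 i iG.
  have phi_i_edges := dirichlet_eq0 wfG
    (etrans (dirichlet_kirchhoff (phi i) wfG si ti (Kphi iG)) ri0).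
  rewrite ri0 !mul0r big1 // => j jG.
  by rewrite transferC // phi_i_edges // subrr; ring.
have pq : src G i != tgt G i by apply: contraNneq ri0 => ->; rewrite subrr.
rewrite /r_const (big_setD1 i iG) /= subrr mul0r add0r mulr_sumr.
apply: eq_bigr => j /setD1P[ji jG].
rewrite (par_term_contract wfG connG iG pq jG ji (Kphi iG) (Kphi jG) ri0).
by rewrite -(transferC iG jG); field; rewrite L0 ri0.
Qed.

End Transfer.

End Network.

Theorem theorem3p8 (R : realType) (V E : finType) (G : mgraph V E R) :
  is_mgraph G ->
  (#|verts G|%:R - 2) * r_const G =
  \sum_(e in edges G)
     ratio_term (len G e) (R_edge G e) * r_const (contract_edge G e).
Proof.
case=> verts_n0 ends lenG connG.
have wfG : mgraph_wf G by [].
have [phi Kphi] := kirchhoff_family (P := fun e => e \in edges G)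
  (a := src G) (b := tgt G) wfG connG ends.
rewrite (eq_bigr _ (fun i iG => ratio_r_const_contract wfG connG Kphi iG)).
rewrite exchange_big /= (r_const_res wfG connG Kphi) mulr_sumr.
apply: eq_bigr => j jG.
under eq_bigr => i iG do rewrite mulrBl mulrAC.
rewrite sumrB -mulr_suml (foster_identity wfG connG verts_n0 Kphi).
by rewrite (sum_transfer_sq wfG Kphi jG); ring.
Qed.
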